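(* Let $X \subset Y \subset \mathbb{R}^{n}$ be finite sets, let $k \geq 0$ be an integer, let $r > 0$ and $s \geq 0$. Suppose that $X^{k+1}_{dis}$ is $r$-dense in $Y^{k+1}_{dis}$ and that $L_{s,k}(Y) \neq \emptyset$. Then there is a simplicial map $\theta: L_{s,k}(Y) \to L_{s+2r,k}(X)$ such that, for the inclusions $j: L_{s,k}(X) \to L_{s+2r,k}(X)$, $j: L_{s,k}(Y) \to L_{s+2r,k}(Y)$ and $i: L_{s,k}(X) \to L_{s,k}(Y)$, $i: L_{s+2r,k}(X) \to L_{s+2r,k}(Y)$, one has $\theta \circ i = j$ (strict commutativity of the upper triangle), and $i \circ \theta$ is homotopic to $j: L_{s,k}(Y) \to L_{s+2r,k}(Y)$ after geometric realization.
   Context: $\mathbb{R}^n$ carries the Euclidean metric $d$. For subsets $A \subset B$ of a metric space and $r>0$, $A$ is $r$-dense in $B$ if for every $b \in B$ there is an $a \in A$ with $d(a,b) < r$. For a finite $X \subset \mathbb{R}^n$ and $s \ge 0$, $V_{s}(X)$ is the Vietoris–Rips complex: vertex set $X$, simplices the nonempty subsets $\{x_0,\dots,x_p\}$ with $d(x_i,x_j) \le s$ for all $i,j$. For an integer $k \geq 0$, the Lesnick complex $L_{s,k}(X)$ is the full subcomplex of $V_{s}(X)$ on the set of vertices $x \in X$ for which there exist at least $k$ points $x' \in X$, distinct from $x$, with $d(x,x') \leq s$. $X^{k+1}_{dis}$ denotes the set of ordered $(k+1)$-tuples of pairwise distinct points of $X$, regarded as a subset of $(\mathbb{R}^{n})^{k+1}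 = \mathbb{R}^{n(k+1)}$ with its Euclidean metric. *)

From Stdlib Require Import Reals List.
Import ListNotations.
Open Scope R_scope.

(* A point of R^n is a list of n reals; a finite subset of R^n is a
   duplicate-free list of such points. *)
Definition pt := list R.

Definition sum_list (l : list R) : R := fold_right Rplus 0 l.

(* Euclidean distance (on lists of equal length). *)
Definition dist (x y : pt) : R :=
  sqrt (sum_list (map (fun p => (fst p - snd p) ^ 2) (combine x y))).

Definition is_point (n : nat) (x : pt) : Prop := length x = n.

(* X^{k+1}_dis : ordered (k+1)-tuples of pairwise distinct points of X. *)
Definition dis_tuple (X : list pt) (k : nat) (t : list pt) : Prop :=
  length t = S k /\ NoDup t /\ (forall x, In x t -> In x X).

(* Euclidean distance in R^{n(k+1)}: concatenate coordinates. *)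
Definition tuple_dist (t u : list pt) : R := dist (concat t) (concat u).

Definition tuples_dense (r : R) (X Y : list pt) (k : nat) : Prop :=
  forall b, dis_tuple Y k b -> exists a, dis_tuple X k a /\ tuple_dist a b < r.

Definition lesnick_vert (s : R) (k : nat) (X : list pt) (x : pt) : Prop :=
  In x X /\
  exists l : list pt, length l = k /\ NoDup l /\
    (forall x', In x' l -> In x' X /\ x' <> x /\ dist x x' <= s).

(* Simplices of L_{s,k}(X): full subcomplex of the Vietoris-Rips complex
   V_s(X) on the Lesnick vertices.  A simplex is given by a nonempty list
   of its vertices. *)
Definition lesnick_simplex (s : R) (k : nat) (X : list pt) (sigma : list pt) : Prop :=
  sigma <> [] /\
  (forall x, In x sigma -> lesnick_vert s k X x) /\
  (forall x y, In x sigma -> In y sigma -> dist x y <= s).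

Definition complex_nonempty (K : list pt -> Prop) : Prop := exists sigma, K sigma.

Definition simplicial (K L : list pt -> Prop) (theta : pt -> pt) : Prop :=
  forall sigma, K sigma -> L (map theta sigma).

(* Geometric realization |K|: barycentric coordinate functions supported on a
   simplex of K, nonnegative, summing to 1. *)
Definition in_real (K : list pt -> Prop) (a : pt -> R) : Prop :=
  exists sigma, K sigma /\ NoDup sigma /\
    (forall v, ~ In v sigma -> a v = 0) /\
    (forall v, In v sigma -> 0 <= a v) /\
    sum_list (map a sigma) = 1.

Definition pt_eq_dec : forall x y : pt, {x = y} + {x <> y} :=
  list_eq_dec Req_EM_T.

(* Geometric realization |f| of a vertex map f, for complexes with vertices
   in the duplicate-free list V. *)
Definition real_map (V : list pt) (f : pt -> pt) (a : pt -> R) : pt -> R :=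
  fun w => sum_list (map (fun v => if pt_eq_dec (f v) w then a v else 0) V).

(* Continuous maps on geometric realizations of finite complexes whose
   vertices lie in V (topology = metric topology of the sup-distance of
   barycentric coordinates, which is the usual topology for finite complexes). *)
Definition homotopic_real (V : list pt) (K L : list pt -> Prop)
  (f g : (pt -> R) -> (pt -> R)) : Prop :=
  exists H : (pt -> R) -> R -> (pt -> R),
    (forall a t, in_real K a -> 0 <= t <= 1 -> in_real L (H a t)) /\
    (forall a w, in_real K a -> H a 0 w = f a w) /\
    (forall a w, in_real K a -> H a 1 w = g a w) /\
    (forall a t, in_real K a -> 0 <= t <= 1 ->
       forall eps, 0 < eps -> exists delta, 0 < delta /\
         forall b u, in_real K b -> 0 <= u <= 1 -> Rabs (u - t) < delta ->
           (forall v, In v V -> Rabs (b v - a v) < delta) ->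
           forall w, In w V -> Rabs (H b u w - H a t w) < eps).

From Pilot Require Import Defs.
From Stdlib Require Import Reals List Lra Lia Classical ClassicalEpsilon.
Import ListNotations.
Open Scope R_scope.
Local Notation dist := Defs.dist.

(* Density of X^{k+1}_dis in Y^{k+1}_dis lets us approximate a vertex y of
   L_{s,k}(Y) together with its k witnesses by distinct points of X; the
   approximation x of y is a vertex of L_{s+2r,k}(X) with d(y, x) < r, by the
   triangle inequality.  Taking x = y when y is already a vertex of
   L_{s,k}(X) defines the vertex map theta.

   Since theta moves vertices by less than r, it is simplicial into
   L_{s+2r,k}(X), and each simplex sigma of L_{s,k}(Y) together with
   theta(sigma) spans a simplex of L_{s+2r,k}(Y): theta is contiguous to the
   inclusion.  A general lemma shows that such a map is homotopic to the
   inclusion on realizations, via the straight-line homotopy in barycentric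
   coordinates. *)

(** * Euclidean distance *)

Definition sqdist (x y : pt) : R :=
  sum_list (map (fun p => (fst p - snd p) ^ 2) (combine x y)).

Lemma dist_sqdist x y : dist x y = sqrt (sqdist x y).
Proof. reflexivity. Qed.

Lemma sum_list_cons a l : sum_list (a :: l) = a + sum_list l.
Proof. reflexivity. Qed.

Lemma sum_list_app l1 l2 : sum_list (l1 ++ l2) = sum_list l1 + sum_list l2.
Proof.
  induction l1 as [|a l1 IH]; [simpl; ring|].
  rewrite <- app_comm_cons, !sum_list_cons, IH. ring.
Qed.

Lemma sum_list_nonneg l : (forall x, In x l -> 0 <= x) -> 0 <= sum_list l.
Proof.
  induction l as [|a l IH]; intros H; [simpl; lra|].
  rewrite sum_list_cons.
  assert (0 <= a) by (apply H; simpl; auto).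
  assert (0 <= sum_list l) by (apply IH; intros; apply H; simpl; auto).
  lra.
Qed.

Lemma sum_list_In l x : (forall y, In y l -> 0 <= y) -> In x l -> x <= sum_list l.
Proof.
  induction l as [|a l IH]; intros H Hx; [contradiction|].
  rewrite sum_list_cons.
  assert (0 <= a) by (apply H; simpl; auto).
  assert (0 <= sum_list l) by (apply sum_list_nonneg; intros; apply H; simpl; auto).
  destruct Hx as [<-|Hx]; [lra|].
  assert (x <= sum_list l) by (apply IH; auto; intros; apply H; simpl; auto).
  lra.
Qed.

Lemma sqdist_nonneg x y : 0 <= sqdist x y.
Proof.
  apply sum_list_nonneg. intros z Hz.
  apply in_map_iff in Hz. destruct Hz as [p [<- _]]. apply pow2_ge_0.
Qed.

Lemma sqdist_cons a x b y : sqdist (a :: x) (b :: y) = (a - b) ^ 2 + sqdist x y.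
Proof. reflexivity. Qed.

Lemma sqdist_refl x : sqdist x x = 0.
Proof. induction x as [|a x IH]; [reflexivity|]. rewrite sqdist_cons, IH. ring. Qed.

Lemma sqdist_sym x y : sqdist x y = sqdist y x.
Proof.
  revert y; induction x as [|a x IH]; intros [|b y]; try reflexivity.
  rewrite !sqdist_cons, IH. ring.
Qed.

Lemma dist_refl x : dist x x = 0.
Proof. rewrite dist_sqdist, sqdist_refl. apply sqrt_0. Qed.

Lemma dist_sym x y : dist x y = dist y x.
Proof. rewrite !dist_sqdist, sqdist_sym. reflexivity. Qed.

(* One coordinate step of Minkowski's inequality: if P = |(a, p)| and
   Q = |(b, q)| then |(a + b, p + q)| <= P + Q (by Cauchy-Schwarz). *)
Lemma minkowski_step a b p q P Q :
  0 <= p -> 0 <= q -> 0 <= P -> 0 <= Q ->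
  P * P = a ^ 2 + p * p -> Q * Q = b ^ 2 + q * q ->
  (a + b) ^ 2 + (p + q) * (p + q) <= (P + Q) * (P + Q).
Proof.
  intros Hp Hq HP HQ EP EQ.
  assert (Hcs : (a * b + p * q) ^ 2 <= (P * Q) ^ 2).
  { replace ((P * Q) ^ 2) with ((P * P) * (Q * Q)) by ring.
    rewrite EP, EQ. pose proof (pow2_ge_0 (a * q - p * b)). nra. }
  assert (HPQ : 0 <= P * Q) by (apply Rmult_le_pos; auto).
  assert (a * b + p * q <= P * Q).
  { destruct (Rle_dec (a * b + p * q) (P * Q)) as [|Hn]; auto.
    apply Rnot_le_lt in Hn.
    assert ((P * Q) * (P * Q) < (a * b + p * q) * (a * b + p * q))
      by (apply Rmult_le_0_lt_compat; lra).
    nra. }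
  nra.
Qed.

Lemma dist_triangle x y z :
  length x = length y -> length y = length z -> dist x z <= dist x y + dist y z.
Proof.
  rewrite !dist_sqdist.
  revert y z; induction x as [|a x IH]; intros [|b y] [|c z] H1 H2; try discriminate.
  - unfold sqdist; simpl. rewrite sqrt_0. lra.
  - injection H1; injection H2; intros E2 E1. rewrite !sqdist_cons.
    specialize (IH y z E1 E2).
    pose proof (sqdist_nonneg x y). pose proof (sqdist_nonneg y z).
    pose proof (sqdist_nonneg x z).
    set (A := sqdist x y) in *. set (B := sqdist y z) in *. set (C := sqdist x z) in *.
    assert (HC : C <= (sqrt A + sqrt B) * (sqrt A + sqrt B)).
    { rewrite <- (sqrt_sqrt C) by lra. pose proof (sqrt_pos C).
      apply Rmult_le_compat; lra. }
    set (P := sqrt ((a - b) ^ 2 + A)). set (Q := sqrt ((b - c) ^ 2 + B)).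
    pose proof (pow2_ge_0 (a - b)). pose proof (pow2_ge_0 (b - c)).
    assert (HPQ : (a - c) ^ 2 + C <= (P + Q) * (P + Q)).
    { pose proof (minkowski_step (a - b) (b - c) (sqrt A) (sqrt B) P Q
        (sqrt_pos _) (sqrt_pos _) (sqrt_pos _) (sqrt_pos _)
        ltac:(unfold P; rewrite !sqrt_sqrt; lra) ltac:(unfold Q; rewrite !sqrt_sqrt; lra)).
      replace (a - c) with ((a - b) + (b - c)) by ring. lra. }
    apply Rle_trans with (sqrt ((P + Q) * (P + Q))).
    + apply sqrt_le_1_alt. exact HPQ.
    + rewrite sqrt_square; [lra|]. pose proof (sqrt_pos ((a - b) ^ 2 + A)).
      pose proof (sqrt_pos ((b - c) ^ 2 + B)). unfold P, Q. lra.
Qed.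

Lemma combine_app {A B} (p p' : list A) (q q' : list B) :
  length p = length q -> combine (p ++ p') (q ++ q') = combine p q ++ combine p' q'.
Proof.
  revert q; induction p as [|a p IH]; intros [|b q] H; simpl in *;
    try discriminate; auto.
  f_equal. auto.
Qed.

Lemma sqdist_app p p' q q' :
  length p = length q -> sqdist (p ++ p') (q ++ q') = sqdist p q + sqdist p' q'.
Proof.
  intros H. unfold sqdist. rewrite combine_app, map_app, sum_list_app by auto.
  reflexivity.
Qed.

Lemma block_dist_le n t u p q :
  (forall x, In x t -> length x = n) -> (forall x, In x u -> length x = n) ->
  In (p, q) (combine t u) -> dist p q <= tuple_dist t u.
Proof.
  intros Ht Hu Hin. unfold tuple_dist. rewrite !dist_sqdist. apply sqrt_le_1_alt.
  revert u Hu Hin; induction t as [|p0 t IH]; intros [|q0 u] Hu Hin;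
    simpl in Hin; try contradiction.
  simpl (concat _).
  rewrite sqdist_app by (rewrite (Ht p0), (Hu q0); simpl; auto).
  pose proof (sqdist_nonneg p0 q0). pose proof (sqdist_nonneg (concat t) (concat u)).
  destruct Hin as [E|Hin].
  - inversion E; subst; lra.
  - assert (sqdist p q <= sqdist (concat t) (concat u)).
    { apply IH; auto. intros x Hx; apply Ht; simpl; auto.
      intros x Hx; apply Hu; simpl; auto. }
    lra.
Qed.

Lemma combine_partner {A B} (xs : list A) (l : list B) (x : A) (d : B) :
  length xs = length l -> In x xs -> exists y, In y l /\ In (x, y) (combine xs l).
Proof.
  intros Hlen Hx.
  destruct (In_nth _ _ x Hx) as [i [Hi Hxi]].
  exists (nth i l d). split; [apply nth_In; lia|].
  rewrite <- Hxi, <- combine_nth by exact Hlen.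
  apply nth_In. rewrite length_combine. lia.
Qed.

(** * Finite sums *)

Lemma sum_zero {A} (f : A -> R) l :
  (forall x, In x l -> f x = 0) -> sum_list (map f l) = 0.
Proof.
  induction l as [|a l IH]; intros H; [reflexivity|].
  cbn [map]. rewrite sum_list_cons, H, IH; [ring| |simpl; auto].
  intros; apply H; simpl; auto.
Qed.

Lemma sum_add {A} (f g : A -> R) l :
  sum_list (map f l) + sum_list (map g l) = sum_list (map (fun x => f x + g x) l).
Proof.
  induction l as [|a l IH]; [simpl; ring|]. cbn [map]. rewrite !sum_list_cons, <- IH. ring.
Qed.

Lemma sum_sub {A} (f g : A -> R) l :
  sum_list (map f l) - sum_list (map g l) = sum_list (map (fun x => f x - g x) l).
Proof.
  induction l as [|a l IH]; [simpl; ring|]. cbn [map]. rewrite !sum_list_cons, <- IH. ring.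
Qed.

Lemma sum_lin {A} (c1 c2 : R) (f g : A -> R) l :
  sum_list (map (fun x => c1 * f x + c2 * g x) l)
  = c1 * sum_list (map f l) + c2 * sum_list (map g l).
Proof.
  induction l as [|a l IH]; [simpl; ring|]. cbn [map]. rewrite !sum_list_cons, IH. ring.
Qed.

Lemma sum_abs_bound {A} (f : A -> R) l c :
  (forall x, In x l -> Rabs (f x) <= c) -> Rabs (sum_list (map f l)) <= INR (length l) * c.
Proof.
  induction l as [|a l IH]; intros H.
  - simpl. rewrite Rabs_R0. lra.
  - cbn [map length]. rewrite sum_list_cons, S_INR.
    pose proof (Rabs_triang (f a) (sum_list (map f l))).
    assert (Rabs (f a) <= c) by (apply H; simpl; auto).
    assert (Rabs (sum_list (map f l)) <= INR (length l) * c)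
      by (apply IH; intros; apply H; simpl; auto).
    lra.
Qed.

Lemma sum_swap {A B} (F : A -> B -> R) l1 l2 :
  sum_list (map (fun w => sum_list (map (fun v => F w v) l2)) l1) =
  sum_list (map (fun v => sum_list (map (fun w => F w v) l1)) l2).
Proof.
  induction l1 as [|w l1 IH]; cbn [map].
  - symmetry. apply sum_zero. intros; reflexivity.
  - rewrite sum_list_cons, IH, sum_add. reflexivity.
Qed.

Lemma sum_indicator (c : pt) (d : R) l : In c l -> NoDup l ->
  sum_list (map (fun w => if pt_eq_dec c w then d else 0) l) = d.
Proof.
  induction l as [|x l IH]; intros Hin Hnd; [contradiction|].
  inversion Hnd; subst. cbn [map]. rewrite sum_list_cons.
  destruct (pt_eq_dec c x) as [E|E].
  - subst. rewrite sum_zero; [ring|]. intros w Hw.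
    destruct (pt_eq_dec x w); [subst; contradiction|reflexivity].
  - destruct Hin as [Hin|Hin]; [congruence|]. rewrite IH; auto. ring.
Qed.

Lemma sum_superset (f : pt -> R) l2 : forall l1, NoDup l1 -> NoDup l2 -> incl l1 l2 ->
  (forall x, In x l2 -> ~ In x l1 -> f x = 0) -> sum_list (map f l2) = sum_list (map f l1).
Proof.
  induction l2 as [|x l2 IH]; intros l1 Hn1 Hn2 Hinc Hz.
  - destruct l1 as [|y l1]; [reflexivity|]. exfalso. apply (Hinc y); simpl; auto.
  - inversion Hn2 as [|? ? Hx2 Hn2']; subst. cbn [map]. rewrite sum_list_cons.
    destruct (in_dec pt_eq_dec x l1) as [Hx|Hx].
    + destruct (in_split _ _ Hx) as [la [lb E]]. subst l1.
      rewrite map_app. cbn [map]. rewrite sum_list_app, sum_list_cons.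
      rewrite (IH (la ++ lb)).
      * rewrite map_app, sum_list_app. ring.
      * eapply NoDup_remove_1; eauto.
      * auto.
      * intros y Hy.
        assert (Hy' : In y (la ++ x :: lb))
          by (apply in_app_iff in Hy; apply in_app_iff; simpl; tauto).
        destruct (Hinc y Hy') as [<-|]; auto.
        exfalso. apply (NoDup_remove_2 _ _ _ Hn1). exact Hy.
      * intros y Hy Hn. apply Hz; [right; auto|]. intro H'.
        apply in_app_iff in H'. simpl in H'.
        destruct H' as [H'|[<-|H']]; [apply Hn, in_app_iff; auto|contradiction|].
        apply Hn, in_app_iff; auto.
    + rewrite Hz by (simpl; auto). rewrite (IH l1); auto; try ring.
      * intros y Hy. destruct (Hinc y Hy) as [<-|]; auto; contradiction.
      * intros y Hy Hn; apply Hz; simpl; auto.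
Qed.

(** * Contiguous maps are homotopic on geometric realizations *)

Lemma in_real_bound K a : in_real K a -> forall v, 0 <= a v <= 1.
Proof.
  intros [sigma [_ [_ [Hz [Hpos Hsum]]]]] v.
  destruct (in_dec pt_eq_dec v sigma) as [Hv|Hv].
  - split; auto. rewrite <- Hsum. apply sum_list_In; [|apply in_map; auto].
    intros y Hy. apply in_map_iff in Hy. destruct Hy as [x [<- Hx]]. auto.
  - rewrite Hz by auto. lra.
Qed.

Definition contiguous_to_incl (K L : list pt -> Prop) (f : pt -> pt) : Prop :=
  forall sigma, K sigma -> L (nodup pt_eq_dec (sigma ++ map f sigma)).

Definition straight_line (V : list pt) (f : pt -> pt) (a : pt -> R) (t : R) : pt -> R :=
  fun w => (1 - t) * real_map V f a w + t * a w.

Section StraightLine.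

Variables (V : list pt) (f : pt -> pt).

Lemma real_map_mass (sigma tau : list pt) (a : pt -> R) :
  NoDup V -> NoDup sigma -> NoDup tau -> incl sigma V ->
  (forall v, In v sigma -> In (f v) tau) -> (forall v, ~ In v sigma -> a v = 0) ->
  sum_list (map (real_map V f a) tau) = sum_list (map a sigma).
Proof.
  intros HV Hs Ht Hinc Hf Hz. unfold real_map.
  rewrite (sum_swap (fun w v => if pt_eq_dec (f v) w then a v else 0)).
  rewrite (map_ext_in _ a).
  - apply sum_superset; auto.
  - intros v _. destruct (in_dec pt_eq_dec v sigma) as [Hv|Hv].
    + apply sum_indicator; auto.
    + rewrite (Hz v Hv). apply sum_zero. intros w _.
      destruct (pt_eq_dec (f v) w); reflexivity.
Qed.

Lemma real_map_bound a w : (forall v, 0 <= a v <= 1) ->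
  Rabs (real_map V f a w) <= INR (length V) * 1.
Proof.
  intros Ha. apply sum_abs_bound. intros v _.
  destruct (pt_eq_dec (f v) w).
  - pose proof (Ha v). rewrite Rabs_pos_eq; lra.
  - rewrite Rabs_R0; lra.
Qed.

Lemma real_map_lipschitz a b w delta :
  (forall v, In v V -> Rabs (b v - a v) < delta) ->
  Rabs (real_map V f b w - real_map V f a w) <= INR (length V) * delta.
Proof.
  intros Hbv. unfold real_map. rewrite sum_sub. apply sum_abs_bound. intros v Hv.
  destruct (pt_eq_dec (f v) w).
  - left. apply Hbv; auto.
  - replace (0 - 0) with 0 by ring. rewrite Rabs_R0. pose proof (Hbv v Hv).
    pose proof (Rabs_pos (b v - a v)). lra.
Qed.

(* Joint continuity of the straight-line homotopy, with an explicit modulus. *)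
Lemma straight_line_modulus a b t u w delta :
  (forall v, 0 <= a v <= 1) -> 0 <= u <= 1 -> Rabs (u - t) < delta ->
  (forall v, In v V -> Rabs (b v - a v) < delta) -> In w V ->
  Rabs (straight_line V f b u w - straight_line V f a t w)
  <= (2 * INR (length V) + 3) * delta.
Proof.
  intros Ha Hu Hut Hbv Hw. unfold straight_line.
  set (N := INR (length V)).
  pose proof (real_map_bound a w Ha) as HRa.
  pose proof (real_map_lipschitz a b w delta Hbv) as HD.
  set (D := real_map V f b w - real_map V f a w) in *.
  set (Ra := real_map V f a w) in *.
  assert (Haw : Rabs (a w) <= 1) by (pose proof (Ha w); rewrite Rabs_pos_eq; lra).
  assert (Hbw : Rabs (b w - a w) <= delta) by (left; apply Hbv; auto).
  assert (Htu : Rabs (t - u) <= delta) by (rewrite Rabs_minus_sym; left; auto).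
  replace ((1 - u) * real_map V f b w + u * b w - ((1 - t) * Ra + t * a w))
    with ((1 - u) * D + (t - u) * Ra + (u * (b w - a w) + (u - t) * a w))
    by (unfold D, Ra; ring).
  assert (T1 : Rabs ((1 - u) * D) <= 1 * (N * delta)).
  { rewrite Rabs_mult. apply Rmult_le_compat; try apply Rabs_pos; auto.
    rewrite Rabs_pos_eq; lra. }
  assert (T2 : Rabs ((t - u) * Ra) <= delta * (N * 1)).
  { rewrite Rabs_mult. apply Rmult_le_compat; try apply Rabs_pos; auto. }
  assert (T3 : Rabs (u * (b w - a w)) <= 1 * delta).
  { rewrite Rabs_mult. apply Rmult_le_compat; try apply Rabs_pos; auto.
    rewrite Rabs_pos_eq; lra. }
  assert (T4 : Rabs ((u - t) * a w) <= delta * 1).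
  { rewrite Rabs_mult. apply Rmult_le_compat; try apply Rabs_pos; auto; left; auto. }
  pose proof (Rabs_triang ((1 - u) * D + (t - u) * Ra) (u * (b w - a w) + (u - t) * a w)).
  pose proof (Rabs_triang ((1 - u) * D) ((t - u) * Ra)).
  pose proof (Rabs_triang (u * (b w - a w)) ((u - t) * a w)).
  pose proof (Rabs_pos (u - t)).
  nra.
Qed.

Variables (K L : list pt -> Prop).
Hypothesis HVnd : NoDup V.
Hypothesis HKV : forall sigma, K sigma -> incl sigma V.
Hypothesis Hcontig : contiguous_to_incl K L f.

(* At each time the straight line stays in |L|: for a supported on sigma,
   the point lies on the simplex spanned by sigma and f(sigma). *)
Lemma straight_line_in_real a t :
  in_real K a -> 0 <= t <= 1 -> in_real L (straight_line V f a t).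
Proof.
  intros Ha Ht. pose proof (in_real_bound _ _ Ha) as Hab.
  destruct Ha as [sigma [HK [Hnd [Hz [_ Hsum]]]]].
  set (tau := nodup pt_eq_dec (sigma ++ map f sigma)).
  assert (Htau : forall v, In v tau <-> In v sigma \/ In v (map f sigma)).
  { intro v. unfold tau. rewrite nodup_In, in_app_iff. tauto. }
  assert (Htaund : NoDup tau) by apply NoDup_nodup.
  assert (Hfs : forall v, In v sigma -> In (f v) tau)
    by (intros v Hv; apply Htau; right; apply in_map; auto).
  exists tau. split; [apply Hcontig; exact HK|]. split; [exact Htaund|]. split; [|split].
  - intros w Hw. unfold straight_line, real_map.
    rewrite sum_zero, Hz; [ring| |].
    + intro H; apply Hw, Htau; auto.
    + intros v _. destruct (pt_eq_dec (f v) w) as [E|E]; [|reflexivity].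
      apply Hz. intro Hv. apply Hw. rewrite <- E. auto.
  - intros w _. unfold straight_line.
    assert (0 <= real_map V f a w).
    { apply sum_list_nonneg. intros x Hx. apply in_map_iff in Hx.
      destruct Hx as [v [<- _]]. destruct (pt_eq_dec (f v) w); [apply Hab|lra]. }
    pose proof (Hab w). apply Rplus_le_le_0_compat; apply Rmult_le_pos; lra.
  - unfold straight_line. rewrite sum_lin.
    assert (Hincl : incl sigma tau) by (intros x Hx; apply Htau; auto).
    rewrite (real_map_mass sigma tau a), (sum_superset a tau sigma); auto.
    rewrite Hsum. ring.
Qed.

Lemma contiguous_homotopic : homotopic_real V K L (real_map V f) (fun a => a).
Proof.
  exists (straight_line V f). split; [|split; [|split]].
  - apply straight_line_in_real.
  - intros a w _. unfold straight_line. ring.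
  - intros a w _. unfold straight_line. ring.
  - intros a t Ha Ht eps Heps.
    assert (HN : 0 <= INR (length V)) by apply pos_INR.
    set (delta := eps / (2 * (2 * INR (length V) + 3))).
    assert (Hdel : 0 < delta) by (apply Rdiv_lt_0_compat; lra).
    assert (Hdeq : (2 * INR (length V) + 3) * delta = eps / 2)
      by (unfold delta; field; lra).
    exists delta. split; [exact Hdel|].
    intros b u _ Hu Hut Hbv w Hw.
    pose proof (straight_line_modulus a b t u w delta (in_real_bound _ _ Ha) Hu Hut Hbv Hw).
    lra.
Qed.

End StraightLine.

(** * Lesnick vertices and the vertex map *)

Lemma lesnick_vert_mono s s' k X x :
  s <= s' -> lesnick_vert s k X x -> lesnick_vert s' k X x.
Proof.
  intros Hs [HX [l [Hl [Hnd Hall]]]]. split; auto. exists l; split; [|split]; auto.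
  intros x' Hx'. destruct (Hall x' Hx') as [? [? ?]]. repeat split; auto; lra.
Qed.

Lemma lesnick_vert_incl s k X Y x :
  incl X Y -> lesnick_vert s k X x -> lesnick_vert s k Y x.
Proof.
  intros HXY [HX [l [Hl [Hnd Hall]]]]. split; auto. exists l; split; [|split]; auto.
  intros x' Hx'. destruct (Hall x' Hx') as [? [? ?]]. repeat split; auto.
Qed.

Section VertexMap.

Variables (n : nat) (X Y : list pt) (k : nat) (r s : R).
Hypothesis Hlen : forall x, In x Y -> length x = n.
Hypothesis HXY : incl X Y.

Lemma triangle_in_Y x y z : In x Y -> In y Y -> In z Y -> dist x z <= dist x y + dist y z.
Proof. intros Hx Hy Hz. apply dist_triangle; rewrite !Hlen; auto. Qed.

(* Approximate y and its k witnesses by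
   distinct points x, x_1..x_k of X; then d(x, x_i) <= d(x,y) + d(y,y_i) +
   d(y_i,x_i) < s + 2r. *)
Lemma nearby_lesnick_vertex y :
  tuples_dense r X Y k -> lesnick_vert s k Y y ->
  exists x, lesnick_vert (s + 2 * r) k X x /\ dist y x < r.
Proof.
  intros Hdense [HyY [l [Hl [Hnd Hall]]]].
  assert (Hb : dis_tuple Y k (y :: l)).
  { split; [simpl; congruence|split].
    - constructor; auto. intro Hin. destruct (Hall y Hin) as [_ [Hne _]]. congruence.
    - intros x [<-|Hx]; auto. apply Hall; auto. }
  destruct (Hdense _ Hb) as [[|x xs] [[Hal [Hand Hain]] Hd]]; [discriminate|].
  assert (HxsX : forall z, In z (x :: xs) -> length z = n)
    by (intros z Hz; apply Hlen, HXY, Hain, Hz).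
  assert (HylY : forall z, In z (y :: l) -> length z = n)
    by (intros z [<-|Hz]; apply Hlen; [exact HyY|apply Hall, Hz]).
  assert (Hblock : forall p q, In (p, q) (combine (x :: xs) (y :: l)) -> dist p q < r)
    by (intros p q Hpq; eapply Rle_lt_trans; [apply (block_dist_le n (x :: xs) (y :: l)); auto|exact Hd]).
  assert (Hxy : dist x y < r) by (apply Hblock; simpl; auto).
  inversion Hand as [|? ? Hx Hndxs]; subst. simpl in Hal.
  exists x. split; [|rewrite dist_sym; auto].
  split; [apply Hain; simpl; auto|]. exists xs. split; [lia|]. split; auto.
  intros x' Hx'. split; [apply Hain; simpl; auto|].
  split; [intro; subst; contradiction|].
  destruct (combine_partner xs l x' [] ltac:(lia) Hx') as [yi [Hyi Hc]].
  assert (dist x' yi < r) by (apply Hblock; simpl; auto).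
  destruct (Hall yi Hyi) as [HyiY [_ Hdyyi]].
  assert (Hx'Y : In x' Y) by (apply HXY, Hain; simpl; auto).
  assert (HxY : In x Y) by (apply HXY, Hain; simpl; auto).
  pose proof (triangle_in_Y x y x' HxY HyY Hx'Y).
  pose proof (triangle_in_Y y yi x' HyY HyiY Hx'Y).
  rewrite (dist_sym yi x') in *. lra.
Qed.

Lemma vertex_map_exists y :
  tuples_dense r X Y k -> 0 < r ->
  exists x, (lesnick_vert s k X y -> x = y) /\
    (lesnick_vert s k Y y -> lesnick_vert (s + 2 * r) k X x /\ dist y x < r).
Proof.
  intros Hdense Hr.
  destruct (classic (lesnick_vert s k X y)) as [HX|HnX].
  - exists y. split; auto. intros _. rewrite dist_refl.
    split; [apply lesnick_vert_mono with s; auto; lra|exact Hr].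
  - destruct (classic (lesnick_vert s k Y y)) as [HY|HnY].
    + destruct (nearby_lesnick_vertex y Hdense HY) as [x Hx].
      exists x. split; [contradiction|auto].
    + exists y. split; intros; contradiction.
Qed.

Variable theta : pt -> pt.
Hypothesis Htheta_vert :
  forall y, lesnick_vert s k Y y -> lesnick_vert (s + 2 * r) k X (theta y).
Hypothesis Htheta_close : forall y, lesnick_vert s k Y y -> dist y (theta y) < r.

Lemma theta_in_Y y : lesnick_vert s k Y y -> In (theta y) Y.
Proof. intros H. apply HXY, (Htheta_vert y H). Qed.

(* Distances within sigma together with theta(sigma), for a simplex sigma of
   L_{s,k}(Y): moving each vertex by less than r costs at most 2r. *)
Lemma theta_dist_bounds sigma : lesnick_simplex s k Y sigma ->
  (forall x z, In x sigma -> In z sigma -> dist x (theta z) <= s + r) /\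
  (forall x z, In x sigma -> In z sigma -> dist (theta x) (theta z) <= s + 2 * r).
Proof.
  intros [_ [Hv Hd]].
  assert (Hmixed : forall x z, In x sigma -> In z sigma -> dist x (theta z) <= s + r).
  { intros x z Hx Hz. pose proof (Hv x Hx) as Vx. pose proof (Hv z Hz) as Vz.
    pose proof (triangle_in_Y x z (theta z) (proj1 Vx) (proj1 Vz) (theta_in_Y z Vz)).
    pose proof (Hd x z Hx Hz). pose proof (Htheta_close z Vz). lra. }
  split; [exact Hmixed|].
  intros x z Hx Hz. pose proof (Hv x Hx) as Vx. pose proof (Hv z Hz) as Vz.
  pose proof (triangle_in_Y (theta x) x (theta z) (theta_in_Y x Vx) (proj1 Vx)
    (theta_in_Y z Vz)).
  pose proof (Hmixed x z Hx Hz). pose proof (Htheta_close x Vx).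
  rewrite (dist_sym (theta x) x) in *. lra.
Qed.

Lemma theta_simplicial :
  simplicial (lesnick_simplex s k Y) (lesnick_simplex (s + 2 * r) k X) theta.
Proof.
  intros sigma Hsigma. pose proof (theta_dist_bounds sigma Hsigma) as [_ Hthth].
  destruct Hsigma as [Hne [Hv _]]. split; [|split].
  - destruct sigma; [congruence|discriminate].
  - intros x Hx. apply in_map_iff in Hx. destruct Hx as [y [<- Hy]].
    apply Htheta_vert, Hv; auto.
  - intros x z Hx Hz. apply in_map_iff in Hx. destruct Hx as [y1 [<- Hy1]].
    apply in_map_iff in Hz. destruct Hz as [y2 [<- Hy2]]. auto.
Qed.

Lemma theta_contiguous (Hr : 0 < r) :
  contiguous_to_incl (lesnick_simplex s k Y) (lesnick_simplex (s + 2 * r) k Y) theta.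
Proof.
  intros sigma Hsigma.
  pose proof (theta_dist_bounds sigma Hsigma) as [Hmixed Hthth].
  destruct Hsigma as [Hne [Hv Hd]].
  set (tau := nodup pt_eq_dec (sigma ++ map theta sigma)).
  assert (Htau : forall v, In v tau <-> In v sigma \/ In v (map theta sigma)).
  { intro v. unfold tau. rewrite nodup_In, in_app_iff. tauto. }
  split; [|split].
  - destruct sigma as [|x0 sig]; [congruence|]. intro E.
    assert (H0 : In x0 tau) by (apply Htau; simpl; auto). rewrite E in H0. contradiction.
  - intros x Hx. apply Htau in Hx. destruct Hx as [Hx|Hx].
    + apply lesnick_vert_mono with s; [lra|auto].
    + apply in_map_iff in Hx. destruct Hx as [y [<- Hy]].
      apply lesnick_vert_incl with X; auto.
  - intros x z Hx Hz. apply Htau in Hx. apply Htau in Hz.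
    destruct Hx as [Hx|Hx]; destruct Hz as [Hz|Hz].
    + pose proof (Hd x z Hx Hz). lra.
    + apply in_map_iff in Hz. destruct Hz as [z' [<- Hz]].
      pose proof (Hmixed x z' Hx Hz). lra.
    + apply in_map_iff in Hx. destruct Hx as [x' [<- Hx]].
      rewrite dist_sym. pose proof (Hmixed z x' Hz Hx). lra.
    + apply in_map_iff in Hx. destruct Hx as [x' [<- Hx]].
      apply in_map_iff in Hz. destruct Hz as [z' [<- Hz]]. auto.
Qed.

End VertexMap.

Theorem theorem3 (n : nat) (X Y : list pt) (k : nat) (r s : R)
  (HXn : forall x, In x Y -> is_point n x)
  (HXnd : NoDup X) (HYnd : NoDup Y) (HXY : incl X Y)
  (Hr : 0 < r) (Hs : 0 <= s)
  (Hdense : tuples_dense r X Y k)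
  (Hne : complex_nonempty (lesnick_simplex s k Y)) :
  exists theta : pt -> pt,
    simplicial (lesnick_simplex s k Y) (lesnick_simplex (s + 2 * r) k X) theta /\
    (forall x, lesnick_vert s k X x -> theta x = x) /\
    homotopic_real Y (lesnick_simplex s k Y) (lesnick_simplex (s + 2 * r) k Y)
      (real_map Y theta) (fun a => a).
Proof.
  destruct (choice (fun y x => (lesnick_vert s k X y -> x = y) /\
     (lesnick_vert s k Y y -> lesnick_vert (s + 2 * r) k X x /\ dist y x < r)))
    as [theta Htheta].
  { intro y. exact (vertex_map_exists n X Y k r s HXn HXY y Hdense Hr). }
  assert (Hvert : forall y, lesnick_vert s k Y y -> lesnick_vert (s + 2 * r) k X (theta y))
    by (intros y Hy; apply (Htheta y), Hy).
  assert (Hclose : forall y, lesnick_vert s k Y y -> dist y (theta y) < r)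
    by (intros y Hy; apply (Htheta y), Hy).
  exists theta. split; [|split].
  - exact (theta_simplicial n X Y k r s HXn HXY theta Hvert Hclose).
  - intros x Hx. apply (Htheta x), Hx.
  - apply contiguous_homotopic; [exact HYnd| |].
    + intros sigma [_ [Hv _]] x Hx. apply (Hv x Hx).
    + exact (theta_contiguous n X Y k r s HXn HXY theta Hvert Hclose Hr).
Qed.
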